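(* For any simple graph $G$ and any integer $k \geq 1$, $2\alpha'_k(G) \geq k|V(G)| - \phi_k(G)$.
   Context: $\alpha'_k(G)$ is the maximum number of edges of a $k$-edge-colorable subgraph of $G$. For $D\subseteq V(G)$, $\phi_k(D)=k|D|-|E(G[D])|$ and $\phi_k(G)=\max_{D\subseteq V(G)}\phi_k(D)$. *)

From HB Require Import structures.
From mathcomp Require Import all_boot all_order all_algebra.
Set Implicit Arguments. Unset Strict Implicit. Unset Printing Implicit Defensive.
Import Order.TTheory GRing.Theory Num.Theory.

Definition simple_graph (V : finType) (e : rel V) : Prop :=
  symmetric e /\ irreflexive e.

Definition edges (V : finType) (e : rel V) : {set {set V}} :=
  [set f : {set V} | [exists x, exists y, e x y && (f == [set x; y])]].

Definition k_edge_colorable (V : finType) (k : nat) (F : {set {set V}}) : bool :=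
  [exists c : {ffun {set V} -> 'I_k},
     [forall f1 in F, forall f2 in F,
        ((f1 != f2) && ~~ [disjoint f1 & f2]) ==> (c f1 != c f2)]].

Definition alpha_k (V : finType) (e : rel V) (k : nat) : nat :=
  \max_(F : {set {set V}} | (F \subset edges e) && k_edge_colorable k F) #|F|.

Definition induced_edges (V : finType) (e : rel V) (D : {set V}) : {set {set V}} :=
  [set f in edges e | f \subset D].

Definition phi_k_set (V : finType) (e : rel V) (k : nat) (D : {set V}) : int :=
  ((k * #|D|)%:Z - (#|induced_edges e D|)%:Z)%R.

(* phi_k(G) = max_D phi_k(D). The fold starts at 0, which is harmless since
   phi_k(set0) = 0, so the max is attained. *)
Definition phi_k (V : finType) (e : rel V) (k : nat) : int :=
  \big[Num.max/0%R]_(D : {set V}) phi_k_set e k D.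

From HB Require Import structures.
From mathcomp Require Import all_boot all_order all_algebra.
From mathcomp Require Import perm zify.
Import Order.TTheory GRing.Theory Num.Theory.

(* Fix a maximum k-edge-colourable subgraph F with a proper colouring c, and
   let U be the set of vertices of F-degree less than k.  Every y in U misses
   some colour m y.  If yu is an edge of G[U] outside F, a Kempe-chain switch
   shows that m u is present at y (else yu could be added to F), and distinct
   such neighbours u get distinct colours m u, since the (m u, m y)-chain
   starting at y is a path with only one other end.  Hence at every y in U at
   most deg_F y edges of G[U] avoid F, so |E(G[U])| <= sum_{y in U} deg_F y,
   while every vertex outside U has F-degree k.  Double counting gives
   k|V| + |E(G[U])| <= 2|F| + k|U|, i.e. k|V| - phi_k(U) <= 2 alpha'_k(G). *)

Set Implicit Arguments. Unset Strict Implicit. Unset Printing Implicit Defensive.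

Section DegreeTwoComponents.

Variables (T : finType) (R : rel T).
Hypothesis R_sym : symmetric R.
Hypothesis R_deg_le2 : forall y p q w, R y p -> R y q -> R y w ->
  [|| p == q, p == w | q == w].

Definition deg_le1 (x : T) := forall p q, R x p -> R x q -> p = q.

Lemma path_last_uniq u u' :
  deg_le1 u -> deg_le1 u' ->
  forall s s' y0 y1, R y0 y1 -> path R y1 s -> path R y1 s' ->
  uniq (y0 :: y1 :: s) -> uniq (y0 :: y1 :: s') ->
  last y1 s = u -> last y1 s' = u' -> u = u'.
Proof.
move=> du du'; elim=> [|z t IH] [|z' t'] y0 y1 R01 /= P P' Us Us' Lu Lu'.
all: subst u u' => //.
- case/andP: P' => R1z' _.
  have E : y0 = z' by apply: du; rewrite // R_sym.
  by move: Us'; rewrite E !inE eqxx !orbT.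
- case/andP: P => R1z _.
  have E : y0 = z by apply: du'; rewrite // R_sym.
  by move: Us; rewrite E !inE eqxx !orbT.
- case/andP: P P' Us Us' => R1z P /andP [R1z' P'] Us Us'.
  have R10 : R y1 y0 by rewrite R_sym.
  case/or3P: (R_deg_le2 R10 R1z R1z') => /eqP E.
  + by move: Us; rewrite E !inE eqxx !orbT.
  + by move: Us'; rewrite E !inE eqxx !orbT.
  + subst z'.
    by apply: (IH t' y1 z) => //; [case/andP: Us | case/andP: Us'].
Qed.

(* In a graph of maximum degree 2, the component of a vertex x of degree at
   most 1 is a path starting at x, so it has at most one other such vertex. *)
Lemma connect_deg_le1_uniq x u u' :
  deg_le1 x -> deg_le1 u -> deg_le1 u' -> u != x -> u' != x ->
  connect R x u -> connect R x u' -> u = u'.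
Proof.
move=> dx du du' nux nu'x /connectP[p0 P0 Eu] /connectP[p0' P0' Eu'].
move: Eu; case: (shortenP P0) => p P U _ Eu.
move: Eu'; case: (shortenP P0') => p' P' U' _ Eu'.
case: p P U Eu => [|z t]; first by move=> _ _ Eu; rewrite Eu eqxx in nux.
case: p' P' U' Eu' => [|z' t']; first by move=> _ _ Eu'; rewrite Eu' eqxx in nu'x.
move=> /= /andP[Rxz' P'] U' Eu' /andP[Rxz P] U Eu.
rewrite -(dx _ _ Rxz Rxz') in P' U' Eu'.
exact: (path_last_uniq du du' Rxz P P' U U' (esym Eu) (esym Eu')).
Qed.

End DegreeTwoComponents.

Lemma sum_card_incident (T : finType) (S : {set {set T}}) (W : {set T}) :
  (forall f, f \in S -> #|f| = 2 /\ f \subset W) ->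
  \sum_(y in W) #|[set f in S | y \in f]| = 2 * #|S|.
Proof.
move=> S2.
transitivity (\sum_(y in W) \sum_(f in S) (y \in f : nat)).
  apply: eq_bigr => y _; rewrite -sum1dep_card big_mkcond [RHS]big_mkcond /=.
  by apply: eq_bigr => f _; case: (f \in S); case: (y \in f).
rewrite exchange_big mulnC -sum_nat_const; apply: eq_bigr => f Sf.
have [<- fW] := S2 f Sf.
rewrite -sum1_card [RHS]big_mkcond [LHS]big_mkcond /=; apply: eq_bigr => y _.
by case yf: (y \in f); rewrite ?(subsetP fW y yf) ?if_same.
Qed.

Definition proper_edge_coloring (V : finType) (k : nat) (F : {set {set V}})
    (c : {ffun {set V} -> 'I_k}) : bool :=
  [forall f1 in F, forall f2 in F,
     ((f1 != f2) && ~~ [disjoint f1 & f2]) ==> (c f1 != c f2)].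

Lemma proper_edge_coloringP (V : finType) (k : nat) (F : {set {set V}})
    (c : {ffun {set V} -> 'I_k}) :
  reflect (forall f1 f2 y, f1 \in F -> f2 \in F -> f1 != f2 ->
             y \in f1 -> y \in f2 -> c f1 != c f2)
          (proper_edge_coloring F c).
Proof.
apply: (iffP forall_inP) => [Hc f1 f2 y F1 F2 n12 y1 y2 | Hc f1 F1].
  move/forall_inP/(_ f2 F2)/implyP: (Hc f1 F1); apply.
  by rewrite n12 -setI_eq0; apply/set0Pn; exists y; rewrite inE y1 y2.
apply/forall_inP => f2 F2; apply/implyP => /andP[n12].
by rewrite -setI_eq0 => /set0Pn[y]; rewrite inE => /andP[]; apply: Hc.
Qed.

Section SimpleGraph.

Variables (V : finType) (e : rel V).
Hypothesis e_irr : irreflexive e.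

Lemma edgesP f : reflect (exists x y, e x y /\ f = [set x; y]) (f \in edges e).
Proof.
rewrite inE; apply: (iffP existsP) => [[x /existsP[y /andP[exy /eqP ->]]]|].
  by exists x, y.
by case=> x [y [exy ->]]; exists x; apply/existsP; exists y; rewrite exy eqxx.
Qed.

Lemma card_edge f : f \in edges e -> #|f| = 2.
Proof.
case/edgesP=> x [y [exy ->]]; rewrite cards2.
by case: eqVneq exy => // ->; rewrite e_irr.
Qed.

Lemma edge_neq x y : [set x; y] \in edges e -> x != y.
Proof. by move/card_edge; rewrite cards2; case: (x != y). Qed.

Lemma phi_k_set_le k D : (phi_k_set e k D <= phi_k e k)%R.
Proof. exact: (@le_bigmax_cond _ _ _ 0%R D xpredT (phi_k_set e k)). Qed.

Lemma exists_maximum_colorable k : 0 < k ->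
  exists (F : {set {set V}}) (c : {ffun {set V} -> 'I_k}),
    [/\ F \subset edges e, proper_edge_coloring F c, alpha_k e k = #|F|
      & forall F' : {set {set V}},
          F' \subset edges e -> k_edge_colorable k F' -> #|F'| <= #|F|].
Proof.
move=> k_gt0.
pose P (F : {set {set V}}) := (F \subset edges e) && k_edge_colorable k F.
have P0 : P set0.
  rewrite /P sub0set; apply/existsP; exists [ffun=> Ordinal k_gt0].
  by apply/forall_inP => f; rewrite inE.
have P_gt0 : 0 < #|P| by apply/card_gt0P; exists set0; rewrite unfold_in.
have [F /andP[FE /existsP[c Fc]] alphaF] := @eq_bigmax_cond _ P (fun F => #|F|) P_gt0.
exists F, c; split=> // F' F'E F'c.
by rewrite -alphaF; apply: leq_bigmax_cond; rewrite unfold_in /P F'E.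
Qed.

End SimpleGraph.

Section MaximumColoring.

Variables (V : finType) (e : rel V) (k : nat).
Hypothesis e_irr : irreflexive e.
Variables (F : {set {set V}}) (c : {ffun {set V} -> 'I_k}).
Hypothesis F_edges : F \subset edges e.
Hypothesis c_proper : proper_edge_coloring F c.
Hypothesis F_max : forall F' : {set {set V}},
  F' \subset edges e -> k_edge_colorable k F' -> #|F'| <= #|F|.

Let c_properP := proper_edge_coloringP F c c_proper.

Definition present (y : V) (i : 'I_k) := [exists f in F, (y \in f) && (c f == i)].

Definition deg (y : V) := #|[set f in F | y \in f]|.

Definition unsaturated := [set y | deg y < k].

Lemma presentP y f : f \in F -> y \in f -> present y (c f).
Proof. by move=> Ff yf; apply/existsP; exists f; rewrite Ff yf eqxx. Qed.

Lemma card_present y : #|[set i | present y i]| = deg y.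
Proof.
have -> : [set i | present y i] = c @: [set f in F | y \in f].
  apply/setP => i; rewrite inE; apply/existsP/imsetP.
    by case=> f /and3P[Ff yf /eqP <-]; exists f; rewrite // inE Ff yf.
  by case=> f; rewrite inE => /andP[Ff yf] ->; exists f; rewrite Ff yf eqxx.
apply: card_in_imset => f1 f2; rewrite !inE => /andP[F1 y1] /andP[F2 y2] E.
by case: (eqVneq f1 f2) => // n12; move: (c_properP F1 F2 n12 y1 y2); rewrite E eqxx.
Qed.

Lemma exists_missing y : deg y < k -> exists i, ~~ present y i.
Proof.
rewrite -card_present => dk; apply/existsP; apply: contraTT dk.
rewrite negb_exists -leqNgt => /forallP allP.
rewrite -[k in k <= _]card_ord subset_leq_card //.
by apply/subsetP => i _; rewrite inE -[present _ _]negbK allP.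
Qed.

Lemma color_nb_inj y p q : [set y; p] \in F -> [set y; q] \in F ->
  c [set y; p] = c [set y; q] -> p = q.
Proof.
move=> Fp Fq Ec; case: (eqVneq [set y; p] [set y; q]) => [E | n].
  have : p \in [set y; q] by rewrite -E !inE eqxx orbT.
  have := edge_neq e_irr (subsetP F_edges _ Fp).
  by rewrite !inE => /negbTE nyp; rewrite eq_sym nyp => /eqP.
by move: (c_properP Fp Fq n (set21 _ _) (set21 _ _)); rewrite Ec eqxx.
Qed.

(* The edges of F coloured a or b: the Kempe (a, b)-chains are its components. *)
Definition kempe_rel (a b : 'I_k) : rel V := fun y z =>
  ([set y; z] \in F) && ((c [set y; z] == a) || (c [set y; z] == b)).

Lemma kempe_rel_sym a b : symmetric (kempe_rel a b).
Proof. by move=> y z; rewrite /kempe_rel setUC. Qed.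

Lemma kempe_relC a b : kempe_rel a b =2 kempe_rel b a.
Proof. by move=> y z; rewrite /kempe_rel orbC. Qed.

Lemma kempe_rel_deg_le2 a b y p q w :
  kempe_rel a b y p -> kempe_rel a b y q -> kempe_rel a b y w ->
  [|| p == q, p == w | q == w].
Proof.
move=> /andP[Fp Cp] /andP[Fq Cq] /andP[Fw Cw].
have : [|| c [set y; p] == c [set y; q], c [set y; p] == c [set y; w]
         | c [set y; q] == c [set y; w]].
  by move: Cp Cq Cw => /orP[]/eqP-> /orP[]/eqP-> /orP[]/eqP->; rewrite ?eqxx ?orbT.
case/or3P=> /eqP E; [ rewrite (color_nb_inj Fp Fq E) | rewrite (color_nb_inj Fp Fw E)
                    | rewrite (color_nb_inj Fq Fw E) ]; by rewrite eqxx ?orbT.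
Qed.

Lemma kempe_rel_missing a b y : ~~ present y a -> deg_le1 (kempe_rel a b) y.
Proof.
move=> ya p q /andP[Fp Cp] /andP[Fq Cq].
have not_a f : f \in F -> y \in f -> (c f == a) = false.
  by move=> Ff yf; apply/negbTE; apply: contraNneq ya => <-; apply: presentP.
rewrite not_a ?set21 //= in Cp; rewrite not_a ?set21 //= in Cq.
by apply: color_nb_inj Fp Fq _; rewrite (eqP Cp) (eqP Cq).
Qed.

Lemma connect_kempe_rel_missing a y u :
  ~~ present y a -> connect (kempe_rel a a) y u -> u = y.
Proof.
move=> ya /connectP[[|z t] //= /andP[/andP[Fyz]] + _ ->].
by rewrite orbb => /eqP Cyz; move: ya; rewrite -Cyz presentP ?set21.
Qed.

Definition kempe_switch (C : {set V}) (a b : 'I_k) : {ffun {set V} -> 'I_k} :=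
  [ffun f : {set V} => if (f \subset C) && ((c f == a) || (c f == b))
             then tperm a b (c f) else c f].

Lemma kempe_switchE (C : {set V}) (a b : 'I_k) (f : {set V}) (y : V) :
  (forall z z', kempe_rel a b z z' -> (z \in C) = (z' \in C)) ->
  f \in F -> y \in f ->
  kempe_switch C a b f = if y \in C then tperm a b (c f) else c f.
Proof.
move=> C_closed Ff yf; rewrite ffunE.
case Cab: ((c f == a) || (c f == b)); last first.
  by move/norP: Cab => [ca cb]; rewrite andbF tpermD 1?eq_sym ?if_same.
case/edgesP: (subsetP F_edges _ Ff) => p [q [_ Ef]].
have /C_closed Cpq : kempe_rel a b p q by rewrite /kempe_rel -Ef Ff Cab.
suff -> : f \subset C = (y \in C) by rewrite andbT.
by move: yf; rewrite Ef subUset !sub1set -Cpq andbb => /set2P[] ->.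
Qed.

(* If an edge xu outside F has colour a missing at u and b missing at x, then
   u lies on the (a, b)-chain of x: otherwise switching a and b on that chain
   frees a at x too, and xu could be added to F with colour a. *)
Lemma connect_kempe x u a b : [set x; u] \in edges e -> [set x; u] \notin F ->
  ~~ present u a -> ~~ present x b -> connect (kempe_rel a b) x u.
Proof.
move=> Exu nFxu ua xb; apply/negPn/negP => nxu.
pose C := [set z | connect (kempe_rel a b) x z].
have xC : x \in C by rewrite inE connect0.
have C_closed z z' : kempe_rel a b z z' -> (z \in C) = (z' \in C).
  move=> r; rewrite !inE; apply/idP/idP => /connect_trans; apply.
    exact: connect1.
  by apply: connect1; rewrite kempe_rel_sym.
pose c' := [ffun f => if f == [set x; u] then a else kempe_switch C a b f].
have c'E f y : f \in F -> y \in f -> c' f = if y \in C then tperm a b (c f) else c f.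
  move=> Ff yf; rewrite ffunE (kempe_switchE C_closed Ff yf).
  by case: eqP Ff => // ->; rewrite (negbTE nFxu).
have c'_ne_a f y : f \in F -> y \in f -> y \in [set x; u] -> c' f != a.
  move=> Ff yf /set2P[] y_eq; rewrite (c'E _ _ Ff yf); subst y.
  - rewrite xC; apply: contraNneq xb => /(congr1 (tperm a b)).
    by rewrite tpermK tpermL => <-; apply: presentP.
  - by rewrite inE (negbTE nxu); apply: contraNneq ua => <-; apply: presentP.
have c'_proper : proper_edge_coloring ([set x; u] |: F) c'.
  apply/proper_edge_coloringP => f1 f2 y.
  have c'xu : c' [set x; u] = a by rewrite ffunE eqxx.
  rewrite !inE => /orP[/eqP-> | F1] /orP[/eqP-> | F2] n12 y1 y2.
  - by rewrite eqxx in n12.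
  - by rewrite c'xu eq_sym (c'_ne_a _ y).
  - by rewrite c'xu (c'_ne_a _ y).
  rewrite (c'E _ _ F1 y1) (c'E _ _ F2 y2).
  case: (y \in C); rewrite ?(inj_eq perm_inj); exact: c_properP F1 F2 n12 y1 y2.
have F'_edges : [set x; u] |: F \subset edges e by rewrite subUset sub1set Exu F_edges.
have := F_max F'_edges (introT existsP (ex_intro _ c' c'_proper)).
by rewrite cardsU1 nFxu ltnn.
Qed.

Variable i0 : 'I_k.

Definition missing (y : V) : 'I_k := odflt i0 [pick i | ~~ present y i].

Lemma missingP y : y \in unsaturated -> ~~ present y (missing y).
Proof.
rewrite inE => /exists_missing[i yi].
by rewrite /missing; case: pickP => [//|/(_ i)]; rewrite yi.
Qed.

Definition free_nbs (y : V) := [set u | [set y; u] \in induced_edges e unsaturated :\: F].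

Lemma free_nbsP y u : u \in free_nbs y ->
  [/\ [set y; u] \in edges e, [set y; u] \notin F, u \in unsaturated & u != y].
Proof.
rewrite inE => /setDP[/setIdP[Eyu]]; rewrite subUset !sub1set => /andP[_ uU] nF.
by split=> //; rewrite eq_sym (edge_neq e_irr Eyu).
Qed.

Lemma card_free_edges_le_nbs y :
  #|[set f in induced_edges e unsaturated :\: F | y \in f]| <= #|free_nbs y|.
Proof.
apply: leq_trans (leq_imset_card (fun u => [set y; u]) _).
apply/subset_leq_card/subsetP => f; rewrite inE => /andP[fI yf].
have /setDP[/setIdP[Ef _] _] := fI.
case/edgesP: Ef => p [q [_ fpq]].
apply/imsetP; move: yf fI; rewrite fpq => /set2P[]-> fI.
- by exists q; rewrite // inE.
- by exists p; [rewrite inE setUC | rewrite setUC].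
Qed.

Lemma present_missing_nb y u :
  y \in unsaturated -> u \in free_nbs y -> present y (missing u).
Proof.
move=> yU /free_nbsP[Eyu nFyu uU nuy]; apply: contraT => ym.
have := connect_kempe Eyu nFyu (missingP uU) ym.
by move/(connect_kempe_rel_missing ym)/eqP; rewrite (negbTE nuy).
Qed.

Lemma missing_inj_free_nbs y :
  y \in unsaturated -> {in free_nbs y &, injective missing}.
Proof.
move=> yU u u' /free_nbsP[E nF uU nuy] /free_nbsP[E' nF' uU' nuy'] m_eq.
have K := connect_kempe E nF (missingP uU) (missingP yU).
have K' := connect_kempe E' nF' (missingP uU') (missingP yU); rewrite -m_eq in K'.
apply: (connect_deg_le1_uniq (@kempe_rel_sym _ _) (@kempe_rel_deg_le2 _ _) _ _ _
          nuy nuy' K K').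
- move=> p q; rewrite (kempe_relC _ _ y p) (kempe_relC _ _ y q).
  exact: kempe_rel_missing (missingP yU) p q.
- exact: kempe_rel_missing (missingP uU).
- by rewrite m_eq; apply: kempe_rel_missing (missingP uU').
Qed.

Lemma card_free_edges_le_deg y : y \in unsaturated ->
  #|[set f in induced_edges e unsaturated :\: F | y \in f]| <= deg y.
Proof.
move=> yU; apply: leq_trans (card_free_edges_le_nbs y) _.
rewrite -card_present -(card_in_imset (missing_inj_free_nbs yU)).
apply/subset_leq_card/subsetP => _ /imsetP[u uN ->]; rewrite inE.
exact: present_missing_nb.
Qed.

Lemma card_induced_le_sum_deg :
  #|induced_edges e unsaturated| <= \sum_(y in unsaturated) deg y.
Proof.
set IE := induced_edges e unsaturated.
have IE2 f : f \in IE -> #|f| = 2 /\ f \subset unsaturated.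
  by rewrite inE => /andP[Ef fU]; rewrite (card_edge e_irr Ef).
have free_le : 2 * #|IE :\: F| <= \sum_(y in unsaturated) deg y.
  rewrite -(sum_card_incident (W:=unsaturated)); last by move=> f /setDP[/IE2].
  by apply: leq_sum => y; apply: card_free_edges_le_deg.
have colored_le : 2 * #|IE :&: F| <= \sum_(y in unsaturated) deg y.
  rewrite -(sum_card_incident (W:=unsaturated)); last by move=> f /setIP[/IE2].
  apply: leq_sum => y _; apply/subset_leq_card/subsetP => f.
  by rewrite !inE => /andP[/andP[_ ->] ->].
rewrite -(cardsID F IE); lia.
Qed.

Lemma k_card_add_induced_le :
  k * #|V| + #|induced_edges e unsaturated| <= 2 * #|F| + k * #|unsaturated|.
Proof.
have sumF : \sum_(y in [set: V]) deg y = 2 * #|F|.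
  apply: sum_card_incident => f Ff.
  by rewrite subsetT (card_edge e_irr (subsetP F_edges f Ff)).
have saturated : k * #|~: unsaturated| <= \sum_(y in ~: unsaturated) deg y.
  by rewrite mulnC -sum_nat_const; apply: leq_sum => y; rewrite !inE -leqNgt.
have split_sum : \sum_(y in [set: V]) deg y =
    \sum_(y in unsaturated) deg y + \sum_(y in ~: unsaturated) deg y.
  by rewrite (@big_setID _ _ _ _ [set: V] unsaturated) setTI setTD.
have := card_induced_le_sum_deg.
rewrite -(cardsC unsaturated) mulnDr; lia.
Qed.

End MaximumColoring.

Unset Implicit Arguments.

Theorem mainTheorem8 (V : finType) (e : rel V) (k : nat) :
  simple_graph e -> (1 <= k)%N ->
  ((k * #|V|)%:Z - phi_k e k <= (2 * alpha_k e k)%:Z)%R.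
Proof.
move=> [_ e_irr] k_gt0.
have [F [c [F_edges c_proper -> F_max]]] := exists_maximum_colorable e k_gt0.
have := k_card_add_induced_le e_irr F_edges c_proper F_max (Ordinal k_gt0).
have := phi_k_set_le e k (unsaturated k F).
rewrite /phi_k_set; lia.
Qed.
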